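(* Assume $\bar p=\mu\cdot\mathbf p=1/2$. There exist constants $C,C'>0$ and $y_0<\infty$ such that for all $n\ge1$, all $y\ge y_0$ and every initial distribution $\eta$ on $\mathcal R$, $$P_\eta\Big(\Big|\sum_{j=1}^n(\tilde G_j-1)\Big|>y\Big)\le C\Big(\exp\Big\{-C'\frac{y^2}{y\vee 8n}\Big\}+\exp\{-C'y\}\Big).$$
   Context: Let $\mathcal R=\{1,\dots,N\}$ and let $K$ be a stochastic matrix on $\mathcal R$ whose Markov chain has a unique closed irreducible subset; let $\mu$ (row vector) be its unique stationary distribution. Fix $p:\mathcal R\to(0,1)$, $\mathbf p=(p(1),\dots,p(N))^t$. Under $P_\eta$, $(R_j)_{j\ge1}$ is a Markov chain with transition matrix $K$ and $R_1\sim\eta$, and given $(R_j)$ the $\xi(j)$ are independent Bernoulli$(p(R_j))$. Let $F_m=\inf\{k\ge0:\sum_{j=1}^{k+m}\xi(j)=m\}$ (number of failures before the $m$-th success), $F_0=0$, and $\tilde G_m=F_m-F_{m-1}$ (number of failures between the $(m-1)$-st and $m$-th success). *)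

From HB Require Import structures.
From mathcomp Require Import all_boot all_order all_algebra.
From mathcomp Require Import all_classical all_reals.
From mathcomp Require Import all_analysis.
Set Implicit Arguments. Unset Strict Implicit. Unset Printing Implicit Defensive.
Import Order.TTheory GRing.Theory Num.Theory.
Local Open Scope ring_scope.

Section Defs.
Variables (R : realType) (N : nat).

Definition stochastic (K : 'M[R]_N) : Prop :=
  (forall i j, 0 <= K i j) /\ (forall i, \sum_j K i j = 1).

Definition step (K : 'M[R]_N) : rel 'I_N := fun i j => 0 < K i j.

Definition closed_irreducible (K : 'M[R]_N) (C : {set 'I_N}) : Prop :=
  C != finset.set0 /\
  (forall i j, i \in C -> 0 < K i j -> j \in C) /\
  (forall i j, i \in C -> j \in C -> connect (step K) i j).

Definition unique_closed_irreducible (K : 'M[R]_N) : Prop :=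
  exists C, closed_irreducible K C /\
            forall C', closed_irreducible K C' -> C' = C.

Definition prob_vec (v : 'rV[R]_N) : Prop :=
  (forall i, 0 <= v 0 i) /\ \sum_i v 0 i = 1.

Definition stationary (K : 'M[R]_N) (mu : 'rV[R]_N) : Prop :=
  prob_vec mu /\ mu *m K = mu.

(* probability under P_eta that (R_1..R_L) = (r 0 .. r (L-1)) and
   (xi(1)..xi(L)) = (b 0 .. b (L-1)); indices are shifted to start at 0 *)
Definition bern (q : R) (b : bool) : R := if b then q else 1 - q.

Definition fdd (K : 'M[R]_N) (p : 'I_N -> R) (eta : 'rV[R]_N)
    (L : nat) (r : nat -> 'I_N) (b : nat -> bool) : R :=
  if L is 0 then 1 else
    eta 0 (r 0%N) * (\prod_(i < L.-1) K (r i) (r i.+1))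
      * \prod_(i < L) bern (p (r i)) (b i).

Section Path.
Variables (T : Type) (xi : nat -> T -> bool).

(* number of successes among xi(1),...,xi(k)  (xi(j+1) is xi j here) *)
Definition nsucc (k : nat) (w : T) : nat := \sum_(j < k) (xi j w : nat).

Definition Ffail (m : nat) (w : T) : \bar R :=
  match pselect (exists k, nsucc (k + m) w == m) with
  | left h => ((ex_minn h)%:R)%:E
  | right _ => +oo%E
  end.

Definition Gt (m : nat) (w : T) : \bar R := (Ffail m w - Ffail m.-1 w)%E.

Definition sumG (n : nat) (w : T) : \bar R :=
  (\sum_(1 <= j < n.+1) (Gt j w - 1%:E))%E.
End Path.

End Defs.

(* The centred success indicators [xi_j - 1/2] are not martingale differences, but
   [p(R_j) - 1/2] has mean zero under the stationary law [mu], so the Poisson equation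
   [h - K h = p - 1/2] has a solution on the finite state space.  Correcting by [h] gives
   the martingale [D_k = sum_{j<k} (xi_j - p(R_j) + h(R_j) - K h(R_{j-1}))] with bounded
   increments, and [(number of successes among the first k trials) - k/2 - D_k] telescopes
   to [h(R_1) - K h(R_k)], which is bounded.  The event [|sum_{j<=n} (G_j - 1)| > y] says
   that among the first [2n + y] trials fewer than [n] succeed, or that among the first
   [2n - y - 1] at least [n] succeed; both are deviations of order [y] of [D_k] for
   [k <= 2n + y], and Azuma's exponential bound, optimized over the exponent, gives the
   Gaussian regime when [y <= 8n] and the exponential one otherwise. *)

From HB Require Import structures.
From mathcomp Require Import all_boot all_order all_algebra.
From mathcomp Require Import all_classical all_reals all_analysis.
From mathcomp Require Import zify ring lra.
Import Order.TTheory GRing.Theory Num.Theory.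

Set Implicit Arguments.
Unset Strict Implicit.
Unset Printing Implicit Defensive.

Local Open Scope ring_scope.

Section ClosedClasses.
Variables (R : realType) (N : nat) (K : 'M[R]_N).

Definition closed_set (S : {set 'I_N}) : Prop :=
  forall i j, i \in S -> 0 < K i j -> j \in S.

Definition harmonic (v : 'I_N -> R) : Prop :=
  forall i, v i = \sum_j K i j * v j.

Lemma closed_connect (S : {set 'I_N}) i j :
  closed_set S -> i \in S -> connect (step K) i j -> j \in S.
Proof.
move=> cS iS /connectP [s pth ->]; elim: s i iS pth => [|a s IH] i iS //=.
by case/andP => Kia /(IH a (cS _ _ iS Kia)).
Qed.

Lemma closed_irreducible_sub (S : {set 'I_N}) :
  S != finset.set0 -> closed_set S -> exists C, closed_irreducible K C /\ C \subset S.
Proof.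
move=> /set0Pn [i0 i0S] cS; pose reach i := [set j | connect (step K) i j].
suff : forall n i, i \in S -> (#|reach i| <= n)%N -> exists C,
    closed_irreducible K C /\ C \subset S by apply; [exact: i0S | exact: leqnn].
elim=> [|n IH] i iS.
  by rewrite leqn0 => /eqP /cards0_eq /setP /(_ i); rewrite !inE connect0.
move=> reach_le.
have [back | /forallPn [j]] :=
  boolP [forall j, (j \in reach i) ==> connect (step K) j i].
- exists (reach i); split; last first.
    by apply/fintype.subsetP => j; rewrite inE; exact: closed_connect.
  split; first by apply/set0Pn; exists i; rewrite inE connect0.
  split=> [a b|a b]; rewrite !inE => ia.
    by move=> Kab; apply: connect_trans ia (connect1 _).
  by move=> ib; move/forallP/(_ a): back; rewrite inE ia => /connect_trans; apply.
- rewrite negb_imply inE => /andP [ij nji].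
  apply: (IH j); first exact: closed_connect cS iS ij.
  rewrite -ltnS; apply: leq_trans reach_le; apply: proper_card.
  apply/properP; split; last by exists i; rewrite !inE ?connect0.
  by apply/fintype.subsetP => k; rewrite !inE; exact: connect_trans ij.
Qed.

Hypotheses (sK : stochastic K) (uK : unique_closed_irreducible K).

(* Maximum principle: the states where a harmonic function attains its maximum form
   a closed set, which must contain the closed irreducible class. *)
Lemma harmonic_max_on_class v : harmonic v ->
  exists C, closed_irreducible K C /\ forall c i, c \in C -> v i <= v c.
Proof.
move=> hv; case: uK => C [ciC uC]; exists C; split=> // c i cC.
have [im _ vmax] := @arg_maxP _ R _ c xpredT v isT.
pose S := [set j | v j == v im].
have cS : closed_set S.
  move=> a b; rewrite !inE => /eqP va Kab.
  have gap0 : \sum_j K a j * (v im - v j) = 0.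
    under eq_bigr do rewrite mulrBr.
    by rewrite sumrB -mulr_suml (proj2 sK) mul1r -hv va subrr.
  have gap_ge0 j : true -> 0 <= K a j * (v im - v j).
    by move=> _; rewrite mulr_ge0 ?(proj1 sK) // subr_ge0; exact: vmax.
  move/eqP: (psumr_eq0P gap_ge0 gap0 (i := b) isT).
  by rewrite mulf_eq0 (gt_eqF Kab) subr_eq0 eq_sym.
have [C' [ciC' C'S]] : exists C', closed_irreducible K C' /\ C' \subset S.
  by apply: closed_irreducible_sub cS; apply/set0Pn; exists im; rewrite inE.
rewrite (uC _ ciC') in C'S; move/fintype.subsetP/(_ c cC): C'S; rewrite inE => /eqP ->.
exact: vmax.
Qed.

Lemma harmonic_const v : harmonic v -> forall i j, v i = v j.
Proof.
move=> hv.
have hNv : harmonic (fun j => - v j).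
  by move=> i; rewrite hv -sumrN; apply: eq_bigr => j _; rewrite mulrN.
have [C [ciC vmax]] := harmonic_max_on_class hv.
have [C' [ciC' vmin]] := harmonic_max_on_class hNv.
have eqC : C' = C by case: uK => C0 [_ uC]; rewrite (uC _ ciC') (uC _ ciC).
subst C'.
have [/set0Pn [c cC] _] := ciC.
have vc i : v i = v c by apply/eqP; rewrite eq_le vmax // -lerN2 vmin.
by move=> i j; rewrite !vc.
Qed.

Lemma mulmx_IsubKtr (u : 'rV[R]_N) i :
  (u *m (1%:M - K)^T) 0 i = u 0 i - \sum_j K i j * u 0 j.
Proof.
rewrite !mxE; under eq_bigr do rewrite !mxE mulrBr.
rewrite sumrB (bigD1 i) //= eqxx mulr1 big1 ?addr0 => [|j]; last first.
  by rewrite eq_sym => /negbTE ->; rewrite mulr0.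
by congr (_ - _); apply: eq_bigr => j _; rewrite mulrC.
Qed.

Lemma harmonic_kermx (u : 'rV[R]_N) : u *m (1%:M - K)^T = 0 -> harmonic (u 0).
Proof.
move=> /matrixP/(_ 0) uK0 i; apply/eqP; rewrite -subr_eq0.
by rewrite -mulmx_IsubKtr uK0 mxE.
Qed.

Lemma kermx_IsubKtr (mu : 'rV[R]_N) : stationary K mu ->
  (kermx mu^T <= (1%:M - K)^T)%MS.
Proof.
move=> [[_ mu1] muK]; set A := (1%:M - K)^T.
have [c _] : exists c : 'I_N, True.
  by case: uK => C [[/set0Pn [c _] _] _]; exists c.
pose ones : 'rV[R]_N := const_mx 1.
have ker_const : (kermx A <= ones)%MS.
  apply/row_subP => i; set u := row i (kermx A).
  have hu : harmonic (u 0).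
    by apply: harmonic_kermx; rewrite -row_mul mulmx_ker row0.
  suff -> : u = u 0 c *: ones by exact: scalemx_sub.
  apply/matrixP => a b; rewrite (ord1 a) [RHS]mxE [const_mx _ _ _]mxE mulr1.
  exact: (harmonic_const hu b c).
have rankA : (N <= \rank A + 1)%N.
  have := mxrankS ker_const; rewrite mxrank_ker.
  by have := rank_leq_row ones; have := rank_leq_row A; lia.
have Amu : A *m mu^T = 0 by rewrite -trmx_mul mulmxBr mulmx1 muK subrr trmx0.
have rank_mu : \rank mu^T = 1%N.
  have : \rank mu^T != 0%N.
    rewrite mxrank_eq0; apply/eqP => mu0; move: mu1.
    rewrite big1 => [/eqP|i _]; first by rewrite eq_sym oner_eq0.
    by have := congr1 (fun M : 'cV[R]_N => M i 0) mu0; rewrite !mxE.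
  by have := rank_leq_col mu^T; lia.
have sub : (A <= kermx mu^T)%MS by apply/sub_kermxP.
suff /andP [] : (A == kermx mu^T)%MS by [].
rewrite -(mxrank_leqif_eq sub).2 mxrank_ker rank_mu.
by have := mxrankS sub; rewrite mxrank_ker rank_mu => ?; apply/eqP; lia.
Qed.

Lemma poisson_solvable (mu : 'rV[R]_N) (f : 'I_N -> R) :
  stationary K mu -> \sum_i mu 0 i * f i = 0 ->
  exists h : 'I_N -> R, forall i, h i - \sum_j K i j * h j = f i.
Proof.
move=> muS muf; pose fr : 'rV[R]_N := \row_i f i.
have : (fr <= kermx mu^T)%MS.
  apply/sub_kermxP/matrixP => a b; rewrite (ord1 a) (ord1 b) !mxE -[RHS]muf.
  by apply: eq_bigr => j _; rewrite !mxE mulrC.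
move=> /submx_trans /(_ (kermx_IsubKtr muS)) /submxP [D fD].
exists (D 0) => i; move/matrixP/(_ 0 i): fD; rewrite mxE => ->.
by rewrite mulmx_IsubKtr.
Qed.

End ClosedClasses.

Section ExponentialBounds.
Variable R : realType.

Lemma expR_le_quadratic (x : R) : `|x| <= 1/2 -> expR x <= 1 + x + 2 * x ^+ 2.
Proof.
rewrite ler_norml => /andP [xlo xhi].
have pos : 0 < 1 - x by lra.
rewrite -(ler_pM2r pos); apply: (@le_trans _ _ (expR x * expR (- x))).
  by rewrite ler_wpM2l ?expR_ge0 //; exact: expR_ge1Dx.
rewrite expRxMexpNx_1.
have : 0 <= x ^+ 2 * (1 - 2 * x) by rewrite mulr_ge0 ?sqr_ge0 //; lra.
have -> : x ^+ 2 * (1 - 2 * x) = (1 + x + 2 * x ^+ 2) * (1 - x) - 1 by ring.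
by rewrite subr_ge0.
Qed.

Lemma centered_mgf_le (T : finType) (w v : T -> R) (B l : R) :
  (forall x, 0 <= w x) -> \sum_x w x = 1 -> \sum_x w x * v x = 0 ->
  (forall x, `|v x| <= B) -> `|l| * B <= 1/2 ->
  \sum_x w x * expR (l * v x) <= expR (2 * l ^+ 2 * B ^+ 2).
Proof.
move=> w0 w1 wv vB lB.
apply: (@le_trans _ _ (\sum_x w x * (1 + l * v x + 2 * l ^+ 2 * B ^+ 2))).
  apply: ler_sum => x _; apply: ler_wpM2l => //.
  have lv_small : `|l * v x| <= 1/2.
    by rewrite normrM; apply: le_trans lB; apply: ler_wpM2l.
  apply: le_trans (expR_le_quadratic lv_small) _; rewrite lerD2l.
  rewrite exprMn -mulrA ler_wpM2l // ler_wpM2l ?sqr_ge0 //.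
  by have := vB x; rewrite ler_norml => /andP [? ?]; nra.
under eq_bigr do rewrite !mulrDr.
rewrite !big_split /= -!mulr_suml w1 !mul1r.
rewrite (eq_bigr _ (fun x _ => mulrCA (w x) l (v x))) -mulr_sumr wv mulr0 addr0.
exact: expR_ge1Dx.
Qed.

Definition chernoff_bound (B M t : R) : R :=
  expR (- (t ^+ 2 / (16 * M * B ^+ 2))) + expR (- (t / (4 * B))).

(* Optimizing the Chernoff exponent: [l = t / (8 M B^2)] when [t <= 4 M B] and
   [l = 1 / (2 B)] otherwise. *)
Lemma chernoff_optimize (X : \bar R) (k t M B : R) :
  0 < M -> 1 <= B -> 0 <= t -> 0 <= k -> k <= 2 * M ->
  (forall l, 0 <= l -> l * B <= 1/2 ->
     (X <= (expR (2 * l ^+ 2 * B ^+ 2 * k - l * t))%:E)%E) ->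
  (X <= (chernoff_bound B M t)%:E)%E.
Proof.
rewrite /chernoff_bound => M0 B1 t0 k0 kM hX.
have B0 : 0 < B by lra.
have MB0 : 0 < M * B ^+ 2 by rewrite mulr_gt0 ?exprn_gt0.
have [t_small|t_large] := leP t (4 * M * B).
- pose l := t / (8 * M * B ^+ 2).
  have l0 : 0 <= l by rewrite divr_ge0 //; lra.
  have lB : l * B <= 1/2.
    rewrite /l mulrAC ler_pdivrMr; last lra.
    have : t * B <= 4 * M * B * B by rewrite ler_wpM2r //; lra.
    by move/le_trans; apply; rewrite le_eqVlt; apply/orP; left; apply/eqP; field.
  apply: le_trans (hX _ l0 lB) _; rewrite lee_fin.
  apply: ler_wpDr; first exact: expR_ge0.
  rewrite ler_expR.
  have -> : 2 * l ^+ 2 * B ^+ 2 * k - l * t =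
      - (t ^+ 2 / (16 * M * B ^+ 2)) + t ^+ 2 * (k - 2 * M) / (32 * M ^+ 2 * B ^+ 2).
    by rewrite /l; field; apply/andP; split; lra.
  rewrite gerDl; apply: mulr_le0_ge0.
    by apply: mulr_ge0_le0; [exact: sqr_ge0 | lra].
  by rewrite invr_ge0 !mulr_ge0 ?sqr_ge0 //; lra.
- pose l := 1 / (2 * B).
  have l0 : 0 <= l by rewrite divr_ge0 //; lra.
  have lB : l * B <= 1/2 by rewrite /l le_eqVlt; apply/orP; left; apply/eqP; field; lra.
  apply: le_trans (hX _ l0 lB) _; rewrite lee_fin.
  apply: ler_wpDl; first exact: expR_ge0.
  rewrite ler_expR.
  have -> : 2 * l ^+ 2 * B ^+ 2 * k - l * t = k / 2 - 2 * (t / (4 * B)).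
    by rewrite /l; field; lra.
  have : M < t / (4 * B) by rewrite ltr_pdivlMr; lra.
  lra.
Qed.

Lemma chernoff_bound_weaken (B M t y : R) :
  0 < M -> 1 <= B -> 0 <= y -> y / 8 <= t ->
  chernoff_bound B M t <=
  expR (- (1 / (1024 * B ^+ 2)) * (y ^+ 2 / M)) + expR (- (1 / (1024 * B ^+ 2)) * y).
Proof.
rewrite /chernoff_bound => M0 B1 y0 yt; have B0 : 0 < B by lra.
apply: lerD; rewrite ler_expR mulNr lerN2.
- have -> : 1 / (1024 * B ^+ 2) * (y ^+ 2 / M) = (y / 8) ^+ 2 / (16 * M * B ^+ 2).
    by field; apply/andP; split; lra.
  have y8 : 0 <= y / 8 by lra.
  apply: ler_wpM2r; last by nra.
  by rewrite invr_ge0 !mulr_ge0 ?sqr_ge0 //; lra.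
- have -> : 1 / (1024 * B ^+ 2) * y = (y / 8) / (4 * B) * (1 / (32 * B)).
    by field; lra.
  apply: le_trans (_ : y / 8 / (4 * B) <= _).
    by rewrite ler_piMr ?divr_ge0 // ?ler_pdivrMr; lra.
  by rewrite ler_wpM2r // invr_ge0; lra.
Qed.

End ExponentialBounds.

Lemma probability_inhabited {d} {T : measurableType d} {R : realType}
    (P : probability T R) : exists w : T, True.
Proof.
apply/not_existsP => empty; have := probability_setT P.
suff -> : setT = set0 :> set T by rewrite measure0 => /eqP; rewrite eq_sym eqe oner_eq0.
by apply/seteqP; split=> // w _; apply: (empty w).
Qed.

Lemma measure_big_setU_le {d} {T : measurableType d} {R : realType}
    (mu : {measure set T -> \bar R}) {I : Type} (s : seq I) (F : I -> set T) :
  (forall i, measurable (F i)) ->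
  (mu (\big[setU/set0]_(i <- s) F i) <= \sum_(i <- s) mu (F i))%E.
Proof.
move=> mF; elim: s => [|a s IH]; first by rewrite !big_nil measure0.
rewrite !big_cons; apply: le_trans (measureU2 _ (mF a) _) _.
  exact: bigsetU_measurable.
exact: leeD2l.
Qed.

Section FailureCounts.
Variables (R : realType) (T : Type) (xi : nat -> T -> bool) (w : T).

Local Notation ns k := (nsucc xi k w).

Lemma nsuccS k : ns k.+1 = (ns k + xi k w)%N.
Proof. by rewrite /nsucc big_ord_recr. Qed.

Lemma nsucc_le k : (ns k <= k)%N.
Proof.
elim: k => [|k IH]; first by rewrite /nsucc big_ord0.
by rewrite nsuccS; case: (xi k w) => /=; lia.
Qed.

Lemma nsucc_mono k k' : (k <= k')%N -> (ns k <= ns k')%N.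
Proof. by move/subnK <-; elim: (k' - k)%N => [|j IH] //; rewrite addSn nsuccS; lia. Qed.

Lemma nsucc_onto m k : (m <= ns k)%N -> exists k', ns k' = m.
Proof.
elim: k => [|k IH].
  by rewrite /nsucc big_ord0 leqn0 => /eqP ->; exists 0%N; rewrite big_ord0.
rewrite leq_eqVlt => /orP [/eqP ->|]; first by exists k.+1.
by rewrite nsuccS => lt; apply: IH; move: lt; case: (xi k w) => /=; lia.
Qed.

Lemma Ffail_spec m :
  (Ffail R xi m w = +oo%E /\ forall k, (ns k < m)%N) \/
  (exists F : nat, Ffail R xi m w = (F%:R)%:E /\
     forall a, (F <= a)%N <-> (m <= ns (a + m))%N).
Proof.
rewrite /Ffail; case: pselect => [ex|nex].
- right; exists (ex_minn ex); split=> //.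
  case: ex_minnP => F /eqP nsF Fmin a; split=> [Fa|ma].
    by rewrite -{1}nsF; apply: nsucc_mono; lia.
  rewrite leqNgt; apply/negP => aF.
  have : (F <= a)%N.
    by apply: Fmin; rewrite eqn_leq ma andbT -{2}nsF; apply: nsucc_mono; lia.
  by rewrite leqNgt aF.
- left; split=> // k; rewrite ltnNge; apply/negP => /nsucc_onto [k' nsk'].
  apply: nex; exists (k' - m)%N; rewrite subnK ?nsk' //.
  by rewrite -nsk' nsucc_le.
Qed.

Lemma sumG_finite n F : Ffail R xi n w = (F%:R)%:E ->
  (forall a, (F <= a)%N <-> (n <= ns (a + n))%N) ->
  sumG R xi n w = (F%:R - n%:R)%:E.
Proof.
move=> Fn Fspec.
have Ffin j : (j <= n)%N -> exists v : nat, Ffail R xi j w = (v%:R)%:E.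
  move=> jn; have [[_ few]|[v [-> _]]] := Ffail_spec j; last by exists v.
  by have := few (F + n)%N; have := (Fspec F).1 (leqnn F); lia.
suff /(_ n (leqnn n)) [v [Fv ->]] : forall n', (n' <= n)%N -> exists v : nat,
    Ffail R xi n' w = (v%:R)%:E /\ sumG R xi n' w = (v%:R - n'%:R)%:E.
  by move: Fv; rewrite Fn => -[->].
elim=> [|n' IH] n'n.
  have [[_ /(_ 0%N)]|[v [F0 Fspec0]]] := Ffail_spec 0 => //.
  have v0 : v = 0%N by have := (Fspec0 0%N).2 (leq0n _); lia.
  by subst v; exists 0%N; rewrite F0 /sumG big_geq // subrr.
have [v [Fv sumv]] := IH (ltnW n'n).
have [v' Fv'] := Ffin _ n'n.
exists v'; split=> //.
rewrite /sumG big_nat_recr //= -/(sumG R xi n' w) sumv /Gt /= Fv Fv'.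
by rewrite -!EFinB -EFinD -addn1 natrD; congr EFin; ring.
Qed.

(* With [q] the integer part of [y], [|F_n - n| > y] means [F_n > n + q] or
   [F_n + q < n]. *)
Lemma abs_sumG_gt n y : (1 <= n)%N -> 0 <= y ->
  (y%:E < `|sumG R xi n w|)%E <->
  ((ns (2 * n + Num.truncn y) < n)%N \/
   ((Num.truncn y < n)%N /\ (n <= ns (2 * n - Num.truncn y - 1))%N)).
Proof.
move=> n1 y0; set q := Num.truncn y.
have /andP [qy yq] := truncn_itv y0; rewrite -/q -addn1 natrD in qy yq.
have [[Finf few]|[F [Fn Fspec]]] := Ffail_spec n.
  split=> _; first by left; exact: few.
  suff /fin_numPn [->|->] : sumG R xi n w \isn't a fin_num by rewrite /= ltry.
  rewrite /sumG; case: n n1 {few} Finf => // n' _ Finf.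
  by rewrite big_nat_recr //= fin_numD negb_and fin_numD /Gt fin_numB Finf orbT.
have FA : (ns (2 * n + q) < n)%N <-> (n + q < F)%N.
  have -> : (2 * n + q = n + q + n)%N by lia.
  by have := Fspec (n + q)%N; lia.
have FB : (q < n)%N /\ (n <= ns (2 * n - q - 1))%N <-> (F + q < n)%N.
  have Fspec' : (q < n)%N -> (F <= n - q - 1)%N <-> (n <= ns (2 * n - q - 1))%N.
    by move=> qn; have -> : (2 * n - q - 1 = n - q - 1 + n)%N by lia.
  split=> [[qn /(Fspec' qn)] | Fqn]; first lia.
  have qn : (q < n)%N by lia.
  by split=> //; apply/(Fspec' qn); lia.
rewrite (sumG_finite Fn Fspec) abse_EFin lte_fin FA FB ltr_normr.
split=> [/orP [] ?|[] lt]; [left|right|apply/orP; left|apply/orP; right].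
- by rewrite -(ltr_nat R) natrD; lra.
- by rewrite -(ltr_nat R) natrD; lra.
- by move: lt; rewrite -(ler_nat R) -addn1 !natrD; lra.
- by move: lt; rewrite -(ler_nat R) -addn1 !natrD; lra.
Qed.

End FailureCounts.

Section Trajectories.
Variables (R : realType) (N : nat) (K : 'M[R]_N) (p : 'I_N -> R) (eta : 'rV[R]_N).

Local Notation traj := (nat -> 'I_N * bool).

Definition update (g : traj) (j : nat) (x : 'I_N * bool) : traj :=
  fun i => if i == j then x else g i.

(* [traj_sum m j g Phi] sums [Phi] over the trajectories that agree with [g] outside
   the window [j, j + m). *)
Fixpoint traj_sum (m j : nat) (g : traj) (Phi : traj -> R) : R :=
  if m is m'.+1 then \sum_(x : 'I_N * bool) traj_sum m' j.+1 (update g j x) Phi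
  else Phi g.

Lemma ler_traj_sum m j g (Phi Psi : traj -> R) :
  (forall g, Phi g <= Psi g) -> traj_sum m j g Phi <= traj_sum m j g Psi.
Proof.
move=> PhiPsi; elim: m j g => [|m IH] j g /=; first exact: PhiPsi.
by apply: ler_sum => x _; apply: IH.
Qed.

Lemma traj_sum_mulr m j g (Phi : traj -> R) c :
  traj_sum m j g (fun g => Phi g * c) = traj_sum m j g Phi * c.
Proof.
elim: m j g => [|m IH] j g //=.
by rewrite mulr_suml; apply: eq_bigr => x _; rewrite IH.
Qed.

Definition traj_prob (L : nat) (g : traj) : R :=
  fdd K p eta L (fun i => (g i).1) (fun i => (g i).2).

Lemma traj_prob_update j g x :
  traj_prob j.+1 (update g j x) =
  traj_prob j g * (if j is j'.+1 then K (g j').1 x.1 else eta 0 x.1)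
    * bern (p x.1) x.2.
Proof.
rewrite /traj_prob /fdd /update; case: j => [|j] /=.
  by rewrite big_ord0 big_ord1 /= mulr1 mul1r.
rewrite [\prod_(i < j.+1) K _ _]big_ord_recr [\prod_(i < j.+2) _]big_ord_recr /=.
rewrite eqxx ltn_eqF //.
rewrite (eq_bigr (fun i : 'I_j => K (g i).1 (g i.+1).1)) => [|i _]; last first.
  by rewrite (ltn_eqF (leqW (ltn_ord i))) (@ltn_eqF i.+1 j.+1 (ltn_ord i)).
rewrite (eq_bigr (fun i : 'I_j.+1 => bern (p (g i).1) (g i).2)) => [|i _]; last first.
  by rewrite ltn_eqF.
by ring.
Qed.

Variable h : 'I_N -> R.

Definition Kh (i : 'I_N) : R := \sum_l K i l * h l.

Definition mart_incr (g : traj) (j : nat) : R :=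
  ((g j).2 : nat)%:R - p (g j).1 +
  (if j is j'.+1 then h (g j).1 - Kh (g j').1 else 0).

Definition mart (k : nat) (g : traj) : R := \sum_(j < k) mart_incr g j.

Lemma mart_update j g x :
  mart j.+1 (update g j x) = mart j g + mart_incr (update g j x) j.
Proof.
rewrite /mart big_ord_recr /=; congr (_ + _); apply: eq_bigr => i _.
rewrite /mart_incr /update ltn_eqF //.
by case: (nat_of_ord i) (ltn_ord i) => [|i'] //= lt; rewrite ltn_eqF // ltnW.
Qed.

Lemma mart_incr_update j g x : mart_incr (update g j x) j =
  (x.2 : nat)%:R - p x.1 + (if j is j'.+1 then h x.1 - Kh (g j').1 else 0).
Proof. by rewrite /mart_incr /update eqxx; case: j => [|j] //=; rewrite ltn_eqF. Qed.

Hypotheses (sK : stochastic K) (peta : prob_vec eta) (p01 : forall i, 0 < p i < 1).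

Lemma bern_ge0 i b : 0 <= bern (p i) b.
Proof. by have := p01 i; case: b => /= /andP [? ?]; lra. Qed.

Lemma traj_prob_ge0 L g : 0 <= traj_prob L g.
Proof.
rewrite /traj_prob /fdd; case: L => [|L] //.
rewrite !mulr_ge0 ?(proj1 peta) //; apply: prodr_ge0 => i _.
  exact: (proj1 sK).
exact: bern_ge0.
Qed.

Lemma big_pair_bool (F : 'I_N * bool -> R) :
  \sum_x F x = \sum_i (F (i, true) + F (i, false)).
Proof.
transitivity (\sum_i \sum_(b : bool) F (i, b)).
  by rewrite pair_bigA; apply: eq_bigr => -[].
by apply: eq_bigr => i _; rewrite big_bool.
Qed.

Variable H : R.
Hypotheses (H0 : 0 <= H) (hH : forall i, `|h i| <= H).

Lemma Kh_norm_le i : `|Kh i| <= H.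
Proof.
apply: le_trans (ler_norm_sum _ _ _) _.
apply: le_trans (_ : \sum_l K i l * H <= _).
  by apply: ler_sum => l _; rewrite normrM ger0_norm ?(proj1 sK) // ler_wpM2l ?(proj1 sK).
by rewrite -mulr_suml (proj2 sK) mul1r.
Qed.

Local Notation B := (1 + 2 * H).

Lemma step_mgf_le (q a : 'I_N -> R) l : (forall i, 0 <= q i) -> \sum_i q i = 1 ->
  \sum_i q i * a i = 0 -> (forall i, `|a i| <= 2 * H) -> `|l| * B <= 1/2 ->
  \sum_(x : 'I_N * bool) q x.1 * bern (p x.1) x.2 *
     expR (l * ((x.2 : nat)%:R - p x.1 + a x.1))
  <= expR (2 * l ^+ 2 * B ^+ 2).
Proof.
move=> q0 q1 qa aH lB.
apply: (@centered_mgf_le R _ (fun x => q x.1 * bern (p x.1) x.2)) => //.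
- by move=> x; rewrite mulr_ge0 ?bern_ge0.
- by rewrite big_pair_bool -[RHS]q1; apply: eq_bigr => i _ /=; ring.
- by rewrite big_pair_bool -[RHS]qa; apply: eq_bigr => i _ /=; ring.
- move=> x; apply: le_trans (ler_normD _ _) _; rewrite lerD //.
  have := p01 x.1; case: x.2 => /= /andP [? ?].
  all: by rewrite ler_norml; apply/andP; split; lra.
Qed.

(* Azuma's bound, proved backwards along the trajectory: conditionally on the first [j]
   coordinates, each further increment multiplies the moment generating function by
   at most [expR (2 l^2 B^2)]. *)
Lemma mart_mgf_le k l : `|l| * B <= 1/2 ->
  forall m j g, (j + m)%N = k ->
  traj_sum m j g (fun g => traj_prob k g * expR (l * mart k g))
  <= traj_prob j g * expR (l * mart j g) * expR (2 * l ^+ 2 * B ^+ 2) ^+ m.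
Proof.
move=> lB; set e := expR _; elim=> [|m IH] j g jmk /=.
  by move: jmk; rewrite addn0 => ->; rewrite expr0 mulr1.
apply: (@le_trans _ _ (\sum_(x : 'I_N * bool) traj_prob j.+1 (update g j x) *
     expR (l * mart j.+1 (update g j x)) * e ^+ m)).
  by apply: ler_sum => x _; apply: IH; rewrite addSnnS.
set F := traj_prob j g * expR (l * mart j g) * e ^+ m.
have -> : \sum_(x : 'I_N * bool) traj_prob j.+1 (update g j x) *
     expR (l * mart j.+1 (update g j x)) * e ^+ m =
  F * \sum_(x : 'I_N * bool) (if j is j'.+1 then K (g j').1 x.1 else eta 0 x.1)
     * bern (p x.1) x.2 * expR (l * mart_incr (update g j x) j).
  rewrite mulr_sumr; apply: eq_bigr => x _.
  by rewrite traj_prob_update mart_update mulrDr expRD /F; ring.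
have -> : traj_prob j g * expR (l * mart j g) * e ^+ m.+1 = F * e.
  by rewrite /F exprS; ring.
apply: ler_wpM2l; first by rewrite /F !mulr_ge0 ?exprn_ge0 ?expR_ge0 ?traj_prob_ge0.
under eq_bigr do rewrite mart_incr_update.
case: j {jmk IH F} => [|j] /=.
- apply: (step_mgf_le (q := eta 0) (a := fun _ => 0)) => //.
  + exact: (proj1 peta).
  + exact: (proj2 peta).
  + by rewrite big1 // => i _; rewrite mulr0.
  + by move=> i; rewrite normr0 mulr_ge0.
- apply: (step_mgf_le (q := K (g j).1) (a := fun i => h i - Kh (g j).1)) => //.
  + by move=> i; exact: (proj1 sK).
  + exact: (proj2 sK).
  + under eq_bigr do rewrite mulrBr.
    by rewrite sumrB -mulr_suml (proj2 sK) mul1r subrr.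
  + move=> i; apply: le_trans (ler_normB _ _) _.
    by have := hH i; have := Kh_norm_le (g j).1; lra.
Qed.

Local Open Scope classical_set_scope.

Definition prefix_determined (k : nat) (Phi : traj -> bool) : Prop :=
  forall g g', (forall i, (i < k)%N -> g i = g' i) -> Phi g = Phi g'.

Variables (d : measure_display) (Omega : measurableType d) (P : probability Omega R)
  (Rc : nat -> Omega -> 'I_N) (xi : nat -> Omega -> bool).
Hypotheses (mRc : forall j r, measurable [set w | Rc j w = r])
  (mxi : forall j, measurable [set w | xi j w = true])
  (Pfdd : forall L (r : nat -> 'I_N) (b : nat -> bool),
     P [set w | forall j, (j < L)%N -> Rc j w = r j /\ xi j w = b j]
     = (fdd K p eta L r b)%:E).

Definition path_of (w : Omega) : traj := fun i => (Rc i w, xi i w).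

Definition cylinder (j : nat) (g : traj) : set Omega :=
  [set w | forall i, (i < j)%N -> Rc i w = (g i).1 /\ xi i w = (g i).2].

Lemma cylinder0 g : cylinder 0 g = setT.
Proof. by apply/seteqP; split=> w // _ i. Qed.

Lemma cylinder_measurable j g : measurable (cylinder j g).
Proof.
elim: j => [|j IH]; first by rewrite cylinder0.
have -> : cylinder j.+1 g =
    cylinder j g `&` [set w | Rc j w = (g j).1] `&` [set w | xi j w = (g j).2].
  apply/seteqP; split=> w /=.
    move=> cw; have [Rj xij] := cw j (ltnSn j); split=> //; split=> // i lt.
    by apply: cw; exact: ltnW.
  by move=> [[cw ?] ?] i; rewrite ltnS leq_eqVlt => /orP [/eqP -> //|]; exact: cw.
apply: measurableI; first exact: measurableI.
case: (g j).2; first exact: mxi.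
rewrite (_ : [set w | xi j w = false] = ~` [set w | xi j w = true]).
  exact: measurableC.
by apply/seteqP; split=> w /=; [move=> -> | move/negP/negbTE].
Qed.

(* Splitting the cylinder of length [j] into the cylinders of length [j.+1] reduces
   [P (E `&` cylinder j g)] to the sum of [traj_prob k] over the trajectories of [E]. *)
Lemma prefix_event_bound (Phi : traj -> bool) k : prefix_determined k Phi ->
  forall m j g, (j + m)%N = k ->
  measurable ([set w | Phi (path_of w)] `&` cylinder j g) /\
  (P ([set w | Phi (path_of w)] `&` cylinder j g)
    <= (traj_sum m j g (fun g => (Phi g)%:R * traj_prob k g))%:E)%E.
Proof.
move=> Phik; elim=> [|m IH] j g /=.
  rewrite addn0 => jk; subst k.
  have Phi_cyl w : cylinder j g w -> Phi (path_of w) = Phi g.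
    move=> cw; apply: Phik => i lt; case: (cw i lt).
    by rewrite /path_of; case: (g i) => ? ? /= -> ->.
  have [Phig|nPhig] := boolP (Phi g).
  - have -> : [set w | Phi (path_of w)] `&` cylinder j g = cylinder j g.
      by apply/seteqP; split=> [w [] //|w cw]; split; rewrite //= Phi_cyl.
    by rewrite Pfdd mul1r; split; first exact: cylinder_measurable.
  - have -> : [set w | Phi (path_of w)] `&` cylinder j g = set0.
      by apply/seteqP; split=> // w [/= Phiw /Phi_cyl]; rewrite Phiw (negbTE nPhig).
    by rewrite measure0 mul0r.
move=> jmk; have {}IH x := IH j.+1 (update g j x) (etrans (addSnnS j m) jmk).
have -> : [set w | Phi (path_of w)] `&` cylinder j g =
    \big[setU/set0]_(x <- index_enum ('I_N * bool)%type)
      ([set w | Phi (path_of w)] `&` cylinder j.+1 (update g j x)).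
  rewrite -bigcup_seq; apply/seteqP; split=> w /=.
    move=> [Phiw cw]; exists (path_of w j); first exact: mem_index_enum.
    split=> // i; rewrite ltnS leq_eqVlt => /orP [/eqP ->|lt].
      by rewrite /update eqxx.
    by rewrite /update ltn_eqF //; apply: cw.
  move=> [x _ [Phiw cw]]; split=> // i lt.
  by have := cw i (ltnW lt); rewrite /update ltn_eqF.
split; first by apply: bigsetU_measurable => x _; exact: (IH x).1.
apply: le_trans (measure_big_setU_le P _ (fun x => (IH x).1)) _.
by rewrite -sumEFin; apply: lee_sum => x _; exact: (IH x).2.
Qed.

Lemma prefix_event_measurable (Phi : traj -> bool) k :
  prefix_determined k Phi -> measurable [set w | Phi (path_of w)].
Proof.
move=> Phik; have [w0 _] := probability_inhabited P.
have [+ _] := prefix_event_bound Phik (path_of w0) (add0n k).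
by rewrite cylinder0 setIT.
Qed.

Lemma mart_chernoff (Phi : traj -> bool) k l s :
  prefix_determined k Phi -> `|l| * B <= 1/2 ->
  (forall g, Phi g -> s <= l * mart k g) ->
  (P [set w | Phi (path_of w)] <=
     (expR (2 * l ^+ 2 * B ^+ 2) ^+ k * expR (- s))%:E)%E.
Proof.
move=> Phik lB Phi_dev; have [w0 _] := probability_inhabited P.
have [_] := prefix_event_bound Phik (path_of w0) (add0n k).
rewrite cylinder0 setIT => /le_trans; apply; rewrite lee_fin.
apply: le_trans (ler_traj_sum k 0 (path_of w0)
   (Psi := fun g => traj_prob k g * expR (l * mart k g) * expR (- s)) _) _.
  move=> g; have [Phig|_] /= := boolP (Phi g); last first.
    by rewrite mul0r !mulr_ge0 ?expR_ge0 ?traj_prob_ge0.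
  rewrite mul1r -[X in X <= _]mulr1 -mulrA ler_wpM2l ?traj_prob_ge0 // -expRD.
  by have := Phi_dev g Phig; have := expR_ge1Dx (l * mart k g - s); lra.
rewrite traj_sum_mulr ler_wpM2r ?expR_ge0 //.
apply: le_trans (mart_mgf_le lB (path_of w0) (add0n k)) _.
by rewrite /traj_prob /= /mart big_ord0 mulr0 expR0 !mul1r.
Qed.

Definition succ_count (k : nat) (g : traj) : nat := \sum_(i < k) (g i).2.

Lemma succ_count_determined k (c : pred nat) :
  prefix_determined k (fun g => c (succ_count k g)).
Proof. by move=> g g' gg'; congr c; apply: eq_bigr => i _; rewrite gg'. Qed.

Lemma abs_sumG_gt_event n y : (1 <= n)%N -> 0 <= y ->
  [set w | (y%:E < `|sumG R xi n w|)%E] =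
  [set w | (succ_count (2 * n + Num.truncn y) (path_of w) < n)%N] `|`
  [set w | (Num.truncn y < n)%N &&
           (n <= succ_count (2 * n - Num.truncn y - 1) (path_of w))%N].
Proof.
move=> n1 y0; apply/seteqP; split=> w /=.
  by move/(abs_sumG_gt xi w n1 y0) => [|[-> ?]]; [left|right].
by case=> [?|/andP [? ?]]; apply/(abs_sumG_gt xi w n1 y0); [left|right].
Qed.

Hypothesis hpois : forall i, h i - Kh i = p i - 1/2.

Lemma succ_count_mart k g :
  (succ_count k.+1 g)%:R - k.+1%:R / 2 - mart k.+1 g = h (g 0%N).1 - Kh (g k).1.
Proof.
elim: k => [|k IH].
  rewrite /succ_count /mart !big_ord1 /mart_incr /= addr0.
  by have := hpois (g 0%N).1; lra.
rewrite /succ_count /mart big_ord_recr [\sum_(j < k.+2) _]big_ord_recr /= natrD.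
rewrite -/(succ_count k.+1 g) -/(mart k.+1 g) -[k.+2]addn1 natrD /mart_incr.
by have := hpois (g k.+1).1; move: IH; lra.
Qed.

Lemma succ_count_mart_norm_le k g :
  `|(succ_count k g)%:R - k%:R / 2 - mart k g| <= 2 * H.
Proof.
case: k => [|k].
  by rewrite /succ_count /mart !big_ord0 mul0r !subr0 normr0 mulr_ge0.
rewrite succ_count_mart; apply: le_trans (ler_normB _ _) _.
by have := hH (g 0%N).1; have := Kh_norm_le (g k).1; lra.
Qed.

Lemma succ_count_tail (Phi : traj -> bool) k (s t M : R) :
  prefix_determined k Phi -> `|s| = 1 -> 0 <= t -> 0 < M -> k%:R <= 2 * M ->
  (forall g, Phi g -> t + 2 * H <= s * ((succ_count k g)%:R - k%:R / 2)) ->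
  (P [set w | Phi (path_of w)] <= (chernoff_bound B M t)%:E)%E.
Proof.
move=> Phik s1 t0 M0 kM Phi_dev.
apply: (@chernoff_optimize R _ k%:R) => //; first by rewrite lerDl mulr_ge0.
move=> l l0 lB.
have s2 : s ^+ 2 = 1 by rewrite -real_normK ?num_real // s1 expr1n.
have mart_dev g : Phi g -> l * t <= l * s * mart k g.
  move=> Phig; rewrite -mulrA ler_wpM2l //.
  have : `|s * ((succ_count k g)%:R - k%:R / 2 - mart k g)| <= 2 * H.
    by rewrite normrM s1 mul1r succ_count_mart_norm_le.
  rewrite ler_norml => /andP [_].
  by have := Phi_dev g Phig; rewrite !mulrBr; lra.
have := mart_chernoff Phik _ mart_dev.
by rewrite normrM s1 mulr1 ger0_norm // exprMn s2 mulr1 -expRM_natr -expRD; apply.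
Qed.

Lemma few_successes_tail n q M :
  0 < M -> (2 * n + q)%:R <= 2 * M -> 2 * H <= 1 + q%:R / 2 ->
  (P [set w | (succ_count (2 * n + q) (path_of w) < n)%N]
   <= (chernoff_bound B M (1 + q%:R / 2 - 2 * H))%:E)%E.
Proof.
move=> M0 kM tA0.
apply: (succ_count_tail (succ_count_determined (fun c => (c < n)%N)) (s := -1)) => //.
- by rewrite normrN normr1.
- by rewrite subr_ge0.
- move=> g few_g; have : (succ_count (2 * n + q) g + 1)%:R <= n%:R :> R.
    by rewrite ler_nat addn1.
  by rewrite !natrD; lra.
Qed.

Lemma many_successes_tail n q M :
  0 < M -> (2 * n)%:R <= 2 * M -> 2 * H <= (q%:R + 1) / 2 ->
  (P [set w | (q < n)%N && (n <= succ_count (2 * n - q - 1) (path_of w))%N]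
   <= (chernoff_bound B M ((q%:R + 1) / 2 - 2 * H))%:E)%E.
Proof.
move=> M0 nM tB0.
apply: (succ_count_tail
  (succ_count_determined (fun c => (q < n)%N && (n <= c)%N)) (s := 1)) => //.
- by rewrite normr1.
- by rewrite subr_ge0.
- apply: le_trans nM; rewrite ler_nat -subnDA; exact: leq_subr.
- move=> g /andP [qn]; rewrite -(ler_nat R) -subnDA natrB; last first.
    by rewrite addn1; apply: leq_trans qn (leq_pmull n _).
  by rewrite natrD natrM mulr1n; lra.
Qed.

Lemma sumG_tail n y : (1 <= n)%N -> 8 * H + 4 <= y ->
  (P [set w | (y%:E < `|sumG R xi n w|)%E] <=
   (2 * (expR (- (1 / (1024 * B ^+ 2)) * (y ^+ 2 / Num.max y (8 * n%:R)))
         + expR (- (1 / (1024 * B ^+ 2)) * y)))%:E)%E.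
Proof.
move=> n1 yH; have y0 : 0 <= y by have := H0; lra.
set q := Num.truncn y; have /andP [qy yq] := truncn_itv y0.
rewrite -/q -addn1 natrD in qy yq.
set M := Num.max y (8 * n%:R).
have yM : y <= M by rewrite le_max lexx.
have nM : 8 * n%:R <= M by rewrite le_max lexx orbT.
have n1R : 1 <= n%:R :> R by rewrite ler1n.
have M0 : 0 < M by lra.
have B1 : 1 <= B by rewrite lerDl mulr_ge0.
rewrite abs_sumG_gt_event // -/q.
apply: le_trans (measureU2 P
  (prefix_event_measurable (succ_count_determined (fun c => (c < n)%N)))
  (prefix_event_measurable
     (succ_count_determined (fun c => (q < n)%N && (n <= c)%N)))) _.
apply: le_trans (leeD (few_successes_tail M0 _ _) (many_successes_tail M0 _ _)) _.
- by rewrite natrD natrM; lra.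
- by have := H0; lra.
- by rewrite natrM; lra.
- by have := H0; lra.
have few8 : y / 8 <= 1 + q%:R / 2 - 2 * H by have := H0; lra.
have many8 : y / 8 <= (q%:R + 1) / 2 - 2 * H by have := H0; lra.
rewrite -EFinD lee_fin.
have := chernoff_bound_weaken M0 B1 y0 few8.
by have := chernoff_bound_weaken M0 B1 y0 many8; lra.
Qed.

End Trajectories.

Local Open Scope classical_set_scope.

Theorem lemmaA1 (R : realType) (N : nat) (K : 'M[R]_N) (mu : 'rV[R]_N)
    (p : 'I_N -> R) :
  stochastic K -> unique_closed_irreducible K -> stationary K mu ->
  (forall i, 0 < p i < 1) ->
  \sum_i mu 0 i * p i = 1 / 2 ->
  exists C C' y0 : R, 0 < C /\ 0 < C' /\
    forall (n : nat) (y : R) (eta : 'rV[R]_N),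
      (1 <= n)%N -> y0 <= y -> prob_vec eta ->
      forall (d : measure_display) (Omega : measurableType d)
             (P : probability Omega R)
             (Rc : nat -> Omega -> 'I_N) (xi : nat -> Omega -> bool),
        (forall j r, measurable [set w | Rc j w = r]) ->
        (forall j, measurable [set w | xi j w = true]) ->
        (forall L (r : nat -> 'I_N) (b : nat -> bool),
           P [set w | forall j, (j < L)%N -> Rc j w = r j /\ xi j w = b j]
           = (fdd K p eta L r b)%:E) ->
        (P [set w | (y%:E < `|sumG R xi n w|)%E]
         <= (C * (expR (- C' * (y ^+ 2 / Num.max y (8 * n%:R)))
                  + expR (- C' * y)))%:E)%E.
Proof.
move=> sK uK muS p01 pbar.
have [h hpois] : exists h, forall i, h i - Kh K h i = p i - 1 / 2.
  apply: (poisson_solvable sK uK muS); under eq_bigr do rewrite mulrBr.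
  by rewrite sumrB pbar -mulr_suml (proj2 (proj1 muS)) mul1r; lra.
have [H [H0 hH]] : exists H, 0 <= H /\ forall i, `|h i| <= H.
  exists (\sum_i `|h i|); split=> [|i]; first exact: sumr_ge0.
  by rewrite (bigD1 i) //= ler_wpDr ?sumr_ge0.
exists 2, (1 / (1024 * (1 + 2 * H) ^+ 2)), (8 * H + 4).
split; first lra.
split.
  apply: divr_gt0; first exact: ltr01.
  by apply: mulr_gt0; [rewrite ltr0n | apply: exprn_gt0; lra].
move=> n y eta n1 yH peta d Omega P Rc xi mRc mxi Pfdd.
exact: (sumG_tail sK peta p01 H0 hH mRc mxi Pfdd hpois).
Qed.
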